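(* Let $N=1$. For every $k>2L$, every window string $\vec n=(n_1,\dots,n_k)$ with $L\ge n_1\ge\cdots\ge n_k\ge1$ and every $\mu\in\{0,1\}^{k-1}$, there exists an index $i$ with $2\le i\le k-1$ and $n_{i-1}=n_i=n_{i+1}$, and consequently $$\mathbf{T}^{(k)}_{\mu}(\vec n)=c\,\mathbf{T}^{(k-2)}_{\mu'}(\vec n')$$ for a scalar $c$ depending only on $k,i,\mu$ (independent of $U_1,\dots,U_L$ and $\tilde O$), where $\vec n'$ is $\vec n$ with the entries $n_{i-1},n_i$ deleted and $\mu'$ is $\mu$ with its $(i-1)$-th and $i$-th entries deleted. In particular every control tensor of order $k>2L$ is contractible to one of order $k-2$, so all single-qubit control tensors reduce to those of order at most $2L$.
   Context: Fix integers $L\ge 1$ and $N\ge 1$, and a set $Q$ of $N$ qubit labels. For $q\in Q$ let $\sigma_z^{[q]}$ denote the Pauli-$Z$ operator acting on qubit $q$ tensored with the identity on all other qubits of $(\mathbb{C}^2)^{\otimes N}$. (Digital control) Let $U_1,\dots,U_L$ be arbitrary unitaries on $(\mathbb{C}^2)^{\otimes N}$ ($U_n$ is the control propagator, constant on the $n$-th time window), and let $\tilde O$ be an arbitrary Hermitian unitary operator on $(\mathbb{C}^2)^{\otimes N}$ (the toggling-frame observable). For $q\in Q$ and $n\in\{1,\dots,L\}$ define $\tilde h_q(n)=U_n^\dagger\sigma_z^{[q]}U_n$ and $\bar h_q(n)=-\tilde O^{-1}\tilde h_q(n)\tilde O$. For $k\ge1$, a window string $\vec n=(n_1,\dots,n_k)$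 with $L\ge n_1\ge\cdots\ge n_k\ge1$, a qubit string $\vec q=(q_1,\dots,q_k)\in Q^k$ and a sign string $\mu\in\{0,1\}^{k-1}$, the (window-framed) control tensor is $$\mathbf{T}^{(k)}_{\vec q;\mu}(\vec n)=\sum_{b\in\{0,1\}^k}(-1)^{\sum_{j=1}^{k-1}\mu_j b_{j+1}}\Big(\prod^{\downarrow}_{i:\,b_i=1}\bar h_{q_i}(n_i)\Big)\Big(\prod^{\uparrow}_{i:\,b_i=0}\tilde h_{q_i}(n_i)\Big),$$ where $\prod^{\downarrow}$ is the ordered product with the index $i$ decreasing from left to right, $\prod^{\uparrow}$ is the ordered product with $i$ increasing from left to right, and an empty product is the identity. When $N=1$ the qubit string is omitted and we write $\mathbf{T}^{(k)}_{\mu}(\vec n)$. *)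

From HB Require Import structures.
From mathcomp Require Import all_boot all_order all_algebra.
Set Implicit Arguments. Unset Strict Implicit. Unset Printing Implicit Defensive.
Import Order.TTheory GRing.Theory Num.Theory.
Local Open Scope ring_scope.

(* Single qubit (N = 1): operators are 2x2 matrices over a numeric closed
   field C (e.g. the complex numbers). *)

Definition dag (C : numClosedFieldType) (A : 'M[C]_2) : 'M[C]_2 :=
  (map_mx Num.conj A)^T.

Definition unitary_op (C : numClosedFieldType) (A : 'M[C]_2) : Prop :=
  dag A *m A = 1%:M /\ A *m dag A = 1%:M.

Definition herm_op (C : numClosedFieldType) (A : 'M[C]_2) : Prop :=
  dag A = A.

Definition sigmaz (C : numClosedFieldType) : 'M[C]_2 :=
  \matrix_(i < 2, j < 2) (if i == j then (if i == 0 :> nat then 1 else -1) else 0).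

Definition htil (C : numClosedFieldType) (U : nat -> 'M[C]_2) (n : nat) : 'M[C]_2 :=
  dag (U n) *m sigmaz C *m U n.

Definition hbar (C : numClosedFieldType) (U : nat -> 'M[C]_2) (O : 'M[C]_2)
  (n : nat) : 'M[C]_2 :=
  - (invmx O *m htil U n *m O).

(* Control tensor T^{(k)}_mu(ns), k = size ns, written 0-indexed:
   paper index i (1..k) is nth _ _ (i-1).  The sign exponent is
   sum_{j=1}^{k-1} mu_j b_{j+1}, i.e. sum_{j=0}^{k-2} mu`_j b`_(j+1). *)
Definition ctensor (C : numClosedFieldType) (hb ht : nat -> 'M[C]_2)
  (ns : seq nat) (mu : seq bool) : 'M[C]_2 :=
  \sum_(b : (size ns).-tuple bool)
    ((-1) ^+ (\sum_(0 <= j < (size ns).-1) (nth false mu j && nth false b j.+1))%N)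
    *: ((\prod_(i <- rev (iota 0 (size ns)) | nth false b i) hb (nth 0%N ns i))
        * (\prod_(i <- iota 0 (size ns) | ~~ nth false b i) ht (nth 0%N ns i))).

(* delete the (i-1)-th and i-th entries (1-indexed) of a sequence,
   i.e. 0-indexed positions i-2 and i-1 *)
Definition del2 (T : Type) (s : seq T) (i : nat) : seq T :=
  take (i - 2) s ++ drop i s.

From HB Require Import structures.
From mathcomp Require Import all_boot all_order all_algebra.
From mathcomp Require Import zify ring.

(* Expanding the sum over bit strings one position at a time, innermost
   first, writes T_mu(n) as the image of 1 under the steps
   M |-> M h~(n_i) + (-1)^mu_(i-1) h-(n_i) M, applied along the window string.  Since h~(n) and h-(n) are conjugates of sigma_z,
   hence involutions, the image of this step is an eigenvector of
   M |-> h-(n) M h~(n), and three consecutive steps with the same window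
   collapse to a scalar multiple of the first one.  A nonincreasing string
   with values in 1..L and no three equal consecutive entries has length at
   most 2L, so such a triple exists whenever k > 2L. *)

Set Implicit Arguments.
Unset Strict Implicit.
Unset Printing Implicit Defensive.
Import Order.TTheory GRing.Theory Num.Theory.
Local Open Scope ring_scope.

Lemma big_tuple_cons (V : nmodType) (T : finType) n (F : n.+1.-tuple T -> V) :
  \sum_(t : n.+1.-tuple T) F t = \sum_(x : T) \sum_(t : n.-tuple T) F [tuple of x :: t].
Proof.
rewrite pair_big /=.
rewrite (reindex (fun p : T * n.-tuple T => [tuple of p.1 :: p.2])) //=.
exists (fun t : n.+1.-tuple T => (thead t, [tuple of behead t])).
  by move=> [x t] _ /=; congr pair; apply: val_inj.
by move=> t _; apply: val_inj; case: t => [[|x s] //= _].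
Qed.

Section SignedExpansion.
Variables (R : comNzRingType) (A : algType R) (hb ht : nat -> A).

Definition tensor_step (n : nat) (s : bool) (M : A) : A :=
  M * ht n + (-1) ^+ s *: (hb n * M).

(* Position 0 is adjacent to the middle factor in both ordered products of
   [tensor_sum], so summing over its bit first gives the recursion. *)
Fixpoint tensor_fold (ns : seq nat) (f : nat -> bool) (M : A) : A :=
  if ns is n :: ns' then tensor_fold ns' (f \o succn) (tensor_step n (f 0%N) M)
  else M.

Definition tensor_sum (ns : seq nat) (f : nat -> bool) (M : A) : A :=
  \sum_(b : (size ns).-tuple bool)
    (-1) ^+ (\sum_(0 <= j < size ns) (f j && nth false b j))%N
    *: ((\prod_(i <- rev (iota 0 (size ns)) | nth false b i) hb (nth 0%N ns i))
        * M * (\prod_(i <- iota 0 (size ns) | ~~ nth false b i) ht (nth 0%N ns i))).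

Lemma tensor_sumE ns f M : tensor_sum ns f M = tensor_fold ns f M.
Proof.
elim: ns f M => [|n ns IH] f M.
  rewrite /tensor_sum /= (big_pred1 [tuple]); last first.
    by move=> t; apply/esym/eqP; exact: tuple0.
  by rewrite big_geq // !big_nil expr0 scale1r mulr1 mul1r.
rewrite /= -IH /tensor_sum /= big_tuple_cons big_bool -big_split /=.
apply: eq_bigr => t _.
rewrite !(big_nat_recl _ _ _ (leq0n _)) /= !rev_cons !big_rcons /= !big_cons /=.
rewrite -add1n iotaDl (eq_map add1n) -map_rev !big_map /tensor_step.
rewrite !mulrDr !mulrDl scalerDr addrC; apply: congr2.
  by rewrite !mulr1 andbF add0n !mulrA.
by rewrite andbT exprD mulrC -scalerA -scalerAr -scalerAl !mulrA.
Qed.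

Lemma tensor_foldZ ns f c M : tensor_fold ns f (c *: M) = c *: tensor_fold ns f M.
Proof.
elim: ns f M => [|n ns IH] f M //=; rewrite -IH /tensor_step; congr tensor_fold.
by rewrite scalerDr -scalerAl -scalerAr !scalerA mulrC.
Qed.

Lemma tensor_fold_cat s1 s2 f M :
  tensor_fold (s1 ++ s2) f M =
  tensor_fold s2 (fun j => f (size s1 + j)%N) (tensor_fold s1 f M).
Proof. by elim: s1 f M => [|n s1 IH] f M //=; rewrite IH. Qed.

Lemma eq_in_tensor_fold s f g M :
  (forall j, (j < size s)%N -> f j = g j) -> tensor_fold s f M = tensor_fold s g M.
Proof.
elim: s f g M => [|n s IH] f g M //= fg.
by rewrite fg //; apply: IH => j lt_j; apply: fg.
Qed.

Definition triple_coef (s0 s1 s2 : bool) : R :=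
  let x s := (-1) ^+ s in 1 + x s0 * x s1 + x s0 * x s2 + x s1 * x s2.

Section Involutive.
Variable n : nat.
Hypotheses (hb2 : hb n * hb n = 1) (ht2 : ht n * ht n = 1).

Lemma tensor_step_sandwich s M :
  hb n * tensor_step n s M * ht n = (-1) ^+ s *: tensor_step n s M.
Proof.
rewrite /tensor_step mulrDr mulrDl -!scalerAr -!scalerAl !mulrA hb2 mul1r.
by rewrite -(mulrA _ (ht n)) ht2 mulr1 scalerDr scalerA -expr2 sqrr_sign scale1r addrC.
Qed.

Lemma tensor_step2 s0 s1 M :
  tensor_step n s1 (tensor_step n s0 M) = (1 + (-1) ^+ s0 * (-1) ^+ s1) *: M
     + ((-1) ^+ s0 + (-1) ^+ s1) *: (hb n * M * ht n).
Proof.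
rewrite /tensor_step mulrDl mulrDr -!scalerAl -!scalerAr !mulrA -(mulrA M) ht2.
rewrite mulr1 hb2 mul1r scalerDr scalerA !scalerDl scale1r -!addrA; congr (_ + _).
by rewrite addrA addrC [(-1) ^+ s1 * _]mulrC.
Qed.

Lemma tensor_step3 s0 s1 s2 M :
  tensor_step n s2 (tensor_step n s1 (tensor_step n s0 M))
  = triple_coef s0 s1 s2 *: tensor_step n s0 M.
Proof.
rewrite tensor_step2 tensor_step_sandwich scalerA -scalerDl /triple_coef.
by congr (_ *: _); ring.
Qed.

End Involutive.

Definition skip2 (q : nat) (f : nat -> bool) (j : nat) : bool :=
  f (if (j <= q)%N then j else j.+2).

Lemma tensor_fold_triple a b n f M : hb n * hb n = 1 -> ht n * ht n = 1 ->
  tensor_fold (a ++ [:: n, n, n & b]) f M =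
  triple_coef (f (size a)) (f (size a).+1) (f (size a).+2)
    *: tensor_fold (a ++ n :: b) (skip2 (size a) f) M.
Proof.
move=> hb2 ht2; rewrite !tensor_fold_cat /= tensor_step3 // tensor_foldZ.
have -> : tensor_fold a (skip2 (size a) f) M = tensor_fold a f M.
  by apply: eq_in_tensor_fold => j lt_j; rewrite /skip2 ltnW.
rewrite /skip2 !addn0 !addn1 !addn2 leqnn; congr (_ *: _).
by apply: eq_in_tensor_fold => j _ /=; rewrite !addnS ltnNge leq_addr.
Qed.

End SignedExpansion.

(* The exponent sum_j mu_j b_(j+1) pairs bit i with mu_(i-1); position 0
   carries no sign. *)
Definition signs (mu : seq bool) : nat -> bool := nth false (false :: mu).

Lemma ctensor_fold (C : numClosedFieldType) (hb ht : nat -> 'M[C]_2) ns mu :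
  ctensor hb ht ns mu = tensor_fold hb ht ns (signs mu) 1.
Proof.
rewrite -tensor_sumE /ctensor /tensor_sum; apply: eq_bigr => b _.
rewrite mulr1; congr (_ ^+ _ *: _); move: (tval b) => t.
case: (size ns) => [|k] /=; first by rewrite !big_geq.
by rewrite (big_nat_recl _ _ _ (leq0n _)).
Qed.

Lemma nth_del2 (T : Type) (x0 : T) s i j : (2 <= i)%N ->
  nth x0 (del2 s i) j = nth x0 s (if (j < i - 2)%N then j else j.+2).
Proof.
move=> le2i; rewrite /del2 nth_cat size_take.
have [lt_s|le_s] := ltnP (i - 2) (size s).
  case: ltnP => [lt_j|le_j]; first by rewrite nth_take.
  by rewrite nth_drop; congr nth; lia.
case: ltnP => [lt_j|le_j].
  have lt_ji : (j < i - 2)%N by lia.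
  by rewrite lt_ji nth_take.
rewrite drop_oversize ?nth_nil; last by lia.
by case: ifP => _; rewrite nth_default //; lia.
Qed.

Lemma signs_del2 mu i j : (2 <= i)%N ->
  signs (del2 mu i) j = skip2 (i - 2) (signs mu) j.
Proof.
move=> le2i; case: j => [|j]; rewrite /signs /skip2 /=; first by [].
by rewrite nth_del2 //; case: ltnP.
Qed.

Definition triple_at (s : seq nat) (p : nat) : Prop :=
  [/\ (p.+2 < size s)%N, nth 0%N s p = nth 0%N s p.+1
    & nth 0%N s p.+1 = nth 0%N s p.+2].

Lemma sorted_geq_triple s : sorted geq s -> all (leq 1) s ->
  (2 * head 0%N s < size s)%N -> exists p, triple_at s p.
Proof.
move: {2}(size s) (leqnn (size s)) => m; elim: m s => [|m IH] [|x [|y [|z r]]] //=.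
- by move=> _ _ /andP[? _]; lia.
- by move=> _ _ /and3P[? _ _]; lia.
move=> le_m /and3P[le_yx le_zy sorted_r] /and4P[_ pos_y pos_z pos_r] long.
have [eq_xy|ne_xy] := eqVneq x y; last first.
  have [p trip] : exists p, triple_at [:: y, z & r] p.
    by apply: IH => /=; rewrite ?le_zy ?pos_y ?pos_z ?pos_r //; lia.
  by exists p.+1.
have [eq_yz|ne_yz] := eqVneq y z; first by exists 0%N; split.
have [p trip] : exists p, triple_at (z :: r) p.
  by apply: IH => /=; rewrite ?pos_z ?pos_r //; lia.
by exists p.+2.
Qed.

Definition contraction_coef {C : numClosedFieldType} (i : nat) (mu : seq bool) : C :=
  triple_coef C (signs mu (i - 2)) (signs mu (i - 1)) (signs mu i).

Lemma ctensor_contract (C : numClosedFieldType) (hb ht : nat -> 'M[C]_2) ns mu p :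
  triple_at ns p ->
  hb (nth 0%N ns p) * hb (nth 0%N ns p) = 1 ->
  ht (nth 0%N ns p) * ht (nth 0%N ns p) = 1 ->
  ctensor hb ht ns mu
  = contraction_coef p.+2 mu *: ctensor hb ht (del2 ns p.+2) (del2 mu p.+2).
Proof.
case=> lt_p e01 e12 hb2 ht2.
have ns_split :
    ns = take p ns ++ [:: nth 0%N ns p, nth 0%N ns p, nth 0%N ns p & drop p.+3 ns].
  rewrite -{1}(cat_take_drop p ns) (drop_nth 0%N) 1?(drop_nth 0%N) 1?(drop_nth 0%N);
    [by rewrite -e12 -e01 | lia..].
have del_split : del2 ns p.+2 = take p ns ++ nth 0%N ns p :: drop p.+3 ns.
  by rewrite /del2 subSS subSS subn0 (drop_nth 0%N) // -e12 -e01.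
rewrite !ctensor_fold del_split {1}ns_split tensor_fold_triple // size_takel; last by lia.
congr (_ *: _); first by rewrite /contraction_coef subSS subSS subn0 subn1.
by apply: eq_in_tensor_fold => j _; rewrite signs_del2 // subSS subSS subn0.
Qed.

Lemma involutive_conj (R : pzRingType) (V W X : R) :
  W * V = 1 -> V * W = 1 -> X * X = 1 -> (V * X * W) * (V * X * W) = 1.
Proof. by move=> WV VW XX; rewrite -!mulrA (mulrA W) WV mul1r (mulrA X) XX mul1r VW. Qed.

Lemma sigmaz_involutive (C : numClosedFieldType) : sigmaz C * sigmaz C = 1.
Proof.
apply/matrixP => i j; rewrite !mxE big_ord_recr big_ord1 !mxE.
by case: i => [[|[|i]] //= lt_i]; case: j => [[|[|j]] //= lt_j]; ring.
Qed.

Lemma htil_involutive (C : numClosedFieldType) (U : nat -> 'M[C]_2) n :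
  unitary_op (U n) -> htil U n * htil U n = 1.
Proof.
case; rewrite /htil !mulmxE idmxE => dagU Udag.
exact: involutive_conj (sigmaz_involutive C).
Qed.

Lemma hbar_involutive (C : numClosedFieldType) (U : nat -> 'M[C]_2) O n :
  unitary_op (U n) -> unitary_op O -> hbar U O n * hbar U O n = 1.
Proof.
move=> unitU [dagO _]; have [_ unitO] := mulmx1_unit dagO.
rewrite /hbar mulrNN !mulmxE; apply: involutive_conj (htil_involutive unitU).
  by rewrite -mulmxE mulmxV // idmxE.
by rewrite -mulmxE mulVmx // idmxE.
Qed.

Theorem mainTheorem3 (C : numClosedFieldType) :
  exists cf : nat -> nat -> seq bool -> C,
  forall (L k : nat) (ns : seq nat) (mu : seq bool),
    (1 <= L)%N -> (2 * L < k)%N ->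
    size ns = k -> size mu = k.-1 ->
    all (fun n => (1 <= n <= L)%N) ns ->
    sorted geq ns ->
    exists i : nat,
      [/\ (2 <= i <= k - 1)%N,
          nth 0%N ns (i - 2) = nth 0%N ns (i - 1),
          nth 0%N ns (i - 1) = nth 0%N ns i &
          forall (U : nat -> 'M[C]_2) (O : 'M[C]_2),
            (forall n, (1 <= n <= L)%N -> unitary_op (U n)) ->
            herm_op O -> unitary_op O ->
            ctensor (hbar U O) (htil U) ns mu
            = cf k i mu *: ctensor (hbar U O) (htil U) (del2 ns i) (del2 mu i)].
Proof.
exists (fun _ => contraction_coef).
move=> L k ns mu _ long size_ns _ range sorted_ns.
have [p trip] : exists p, triple_at ns p.
  apply: sorted_geq_triple => //; first by apply: sub_all range => n /andP[].
  case: ns size_ns range {sorted_ns} => [|n s] /= size_ns; first by lia.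
  by case/andP => /andP[_ le_nL] _; lia.
have [lt_p e01 e12] := trip.
exists p.+2; rewrite subSS subSS subn0 subn1 /=; split => //; first by lia.
have range_p : (1 <= nth 0%N ns p <= L)%N by apply: (all_nthP 0%N range); lia.
move=> U O unitU _ unitO; apply: ctensor_contract => //.
  exact: hbar_involutive (unitU _ range_p) unitO.
exact: htil_involutive (unitU _ range_p).
Qed.
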